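(* Let $N\ge2$, $D>0$, $b_1,\dots,b_N>0$, $0<r_1<\cdots<r_N$, and let $$P_N(\lambda)=D\prod_{j=1}^N(\lambda+r_j)-\sum_{i=1}^N b_i\prod_{j\neq i}(\lambda+r_j),$$ with roots $a_1>a_2>\cdots>a_N$. Set $$b:=\min_i b_i,\quad B:=\max_i b_i,\quad r:=\min_{1\le i\le N-1}(r_{i+1}-r_i),$$ $$\mu:=\min\Big\{\frac{b\,r^{N-1}}{4D(2r_N)^{N-1}+4NB(2r_N)^{N-2}+1},\ \frac r4,\ \frac{r_1}4\Big\}.$$ Then $$|P_N(\lambda)|\ge\frac{b\,r^{N-1}}{2}>0\qquad\text{for all }\lambda\in\bigcup_{j=1}^N[-r_j-\mu,-r_j+\mu],$$ and consequently $|a_i-a_j|\ge2\mu$ for all $1\le i<j\le N$.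
   Context: Standing assumptions: $D>0$, $b_i>0$, $0<r_1<\cdots<r_N$. The roots of $P_N$ are real, simple and interlace as $-r_N<a_N<-r_{N-1}<\cdots<-r_1<a_1$. *)

From mathcomp Require Import all_boot all_order all_algebra.
Set Implicit Arguments. Unset Strict Implicit. Unset Printing Implicit Defensive.
Import Order.TTheory GRing.Theory Num.Theory.
Local Open Scope ring_scope.

(* Indices are 0-based: r 0, ..., r (N-1) stand for r_1, ..., r_N, etc. *)

Definition PN {R : realFieldType} (N : nat) (D : R) (b r : nat -> R) (x : R) : R :=
  D * \prod_(j < N) (x + r j)
  - \sum_(i < N) b i * \prod_(j < N | j != i) (x + r j).

Definition bmin {R : realFieldType} (N : nat) (b : nat -> R) : R :=
  \big[Num.min/b 0%N]_(i < N) b i.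

Definition bmax {R : realFieldType} (N : nat) (b : nat -> R) : R :=
  \big[Num.max/b 0%N]_(i < N) b i.

Definition rgap {R : realFieldType} (N : nat) (r : nat -> R) : R :=
  \big[Num.min/(r 1%N - r 0%N)]_(i < N.-1) (r i.+1 - r i).

Definition mu {R : realFieldType} (N : nat) (D : R) (b r : nat -> R) : R :=
  Num.min
    (Num.min
       (bmin N b * rgap N r ^+ (N.-1) /
          (4 * D * (2 * r N.-1) ^+ (N.-1)
           + 4 * N%:R * bmax N b * (2 * r N.-1) ^+ (N - 2) + 1))
       (rgap N r / 4))
    (r 0%N / 4).

From mathcomp Require Import all_boot all_order all_algebra ring lra.
Set Implicit Arguments. Unset Strict Implicit. Unset Printing Implicit Defensive.
Import Order.TTheory GRing.Theory Num.Theory.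
Local Open Scope ring_scope.

(* Near a pole -r_j the term -b_j prod_{k<>j} (x + r_k) of P_N dominates: the
   other poles are at distance at least r - mu, so by Bernoulli's inequality it
   has modulus at least (3/4) b r^(N-1), whereas P_N differs from it by
   (x + r_j) times a polynomial bounded by D (2r_N)^(N-1) + N B (2r_N)^(N-2),
   which the choice of mu makes at most b r^(N-1) / 4.  So every root lies at
   distance more than mu from every pole.  Away from the poles,
   P_N = prod_k (x + r_k) * (D - sum_i b_i / (x + r_i)) and the sum is strictly
   decreasing on pole-free intervals, so two roots are separated by a pole and
   hence more than 2 mu apart. *)

Lemma incr_ltn_lt (d : Order.disp_t) (T : porderType d) N (f : nat -> T) :
  (forall i, (i.+1 < N)%N -> (f i < f i.+1)%O) ->
  forall i j, (i < j)%N -> (j < N)%N -> (f i < f j)%O.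
Proof.
move=> f_incr i j ij jN.
apply: (Order.NatMonotonyTheory.homo_ltn_lt_in (D := gtn N)) => //.
- by move=> u v _ vN k /andP[_ kv]; apply: ltn_trans kv vN.
- by move=> k _; apply: f_incr.
- exact: ltn_trans ij jN.
Qed.

Lemma card_neq1 N (j : 'I_N) : #|[pred k : 'I_N | k != j]| = N.-1.
Proof.
by rewrite -[in RHS](card_ord N) -(cardC1 j); apply: eq_card => k; rewrite !inE.
Qed.

Lemma card_neq2 N (i j : 'I_N) :
  i != j -> #|[pred k : 'I_N | (k != i) && (k != j)]| = (N - 2)%N.
Proof.
move=> ij; rewrite (eq_card (_ : _ =i [predD1 [pred k : 'I_N | k != i] & j])).
  have := cardD1 j [pred k : 'I_N | k != i].
  by rewrite inE eq_sym ij card_neq1 add1n subn2 => ->.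
by move=> k; rewrite !inE andbC.
Qed.

Lemma prodr_const_neq1 (R : comPzSemiRingType) N (j : 'I_N) (c : R) :
  \prod_(k < N | k != j) c = c ^+ N.-1.
Proof. by rewrite prodr_const card_neq1. Qed.

Lemma sumr_const_neq1 (V : nmodType) N (j : 'I_N) (c : V) :
  \sum_(k < N | k != j) c = c *+ N.-1.
Proof. by rewrite sumr_const card_neq1. Qed.

Lemma prodr_const_neq2 (R : comPzSemiRingType) N (i j : 'I_N) (c : R) :
  i != j -> \prod_(k < N | (k != i) && (k != j)) c = c ^+ (N - 2).
Proof. by move=> ij; rewrite prodr_const card_neq2. Qed.

Lemma exprB_ge (R : realDomainType) (x y : R) n :
  0 <= y -> y <= x -> x ^+ n.+1 - n.+1%:R * y * x ^+ n <= (x - y) ^+ n.+1.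
Proof.
move=> y_ge0 yx; elim: n => [|n IHn]; first by rewrite !expr1 expr0 mulr1 mul1r.
have xn_ge0 : 0 <= x ^+ n by rewrite exprn_ge0 // (le_trans y_ge0).
rewrite [(x - y) ^+ n.+2]exprS.
apply: le_trans (ler_wpM2l _ IHn); last by rewrite subr_ge0.
have -> : (x - y) * (x ^+ n.+1 - n.+1%:R * y * x ^+ n) =
    x ^+ n.+2 - n.+2%:R * y * x ^+ n.+1 + n.+1%:R * (y * y * x ^+ n).
  by rewrite !exprS; ring.
by rewrite lerDl !mulr_ge0.
Qed.

Section PNAlgebra.
Variables (R : realFieldType) (N : nat) (D : R) (b r : nat -> R).

Definition prod_but (j : 'I_N) (x : R) := \prod_(k < N | k != j) (x + r k).

Definition PN_quot (j : 'I_N) (x : R) :=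
  D * prod_but j x
  - \sum_(i < N | i != j) b i * \prod_(k < N | (k != i) && (k != j)) (x + r k).

Lemma PN_split (j : 'I_N) x :
  PN N D b r x = - b j * prod_but j x + (x + r j) * PN_quot j x.
Proof.
rewrite /PN /PN_quot /prod_but (bigD1 j) //= [\sum_(i < N) _](bigD1 j) //=.
rewrite mulrBr mulr_sumr [X in _ - (_ + X)](eq_bigr (fun i : 'I_N =>
  (x + r j) * (b i * \prod_(k < N | (k != i) && (k != j)) (x + r k)))).
  by ring.
by move=> i ij; rewrite (bigD1 j) 1?eq_sym //=; ring.
Qed.

Lemma PN_factor x : (forall k : 'I_N, x + r k != 0) ->
  PN N D b r x = (\prod_(k < N) (x + r k)) * (D - \sum_(i < N) b i / (x + r i)).
Proof.
move=> x_nz; rewrite /PN mulrBr mulr_sumr mulrC; congr (_ - _).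
by apply: eq_bigr => i _; rewrite [in RHS](bigD1 i) //=; field; apply: x_nz.
Qed.

Lemma ltr_sum_frac x y : (0 < N)%N -> (forall i, (i < N)%N -> 0 < b i) -> x < y ->
  (forall k : 'I_N, 0 < (x + r k) * (y + r k)) ->
  \sum_(i < N) b i / (y + r i) < \sum_(i < N) b i / (x + r i).
Proof.
move=> N_gt0 b_gt0 xy same_sign; apply: ltr_sum.
  by apply/hasP; exists (Ordinal N_gt0); rewrite ?mem_index_enum.
move=> i _; have xy_i := same_sign i.
rewrite -subr_lt0 (_ : _ - _ = b i * (x - y) / ((x + r i) * (y + r i))).
  by rewrite ltr_pdivrMr // mul0r pmulr_rlt0 ?subr_lt0 ?b_gt0.
have : (x + r i) * (y + r i) != 0 by rewrite gt_eqF.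
by rewrite mulf_eq0 negb_or => /andP[? ?]; field; apply/andP.
Qed.

Lemma PN_pole_between_roots x y :
  (0 < N)%N -> (forall i, (i < N)%N -> 0 < b i) -> x < y ->
  PN N D b r x = 0 -> PN N D b r y = 0 ->
  (forall k : 'I_N, x + r k != 0) -> (forall k : 'I_N, y + r k != 0) ->
  exists k : 'I_N, x < - r k < y.
Proof.
move=> N_gt0 b_gt0 xy PNx PNy x_nz y_nz.
case: (pickP [pred k : 'I_N | x < - r k < y]) => [k /andP[xk ky] | no_pole].
  by exists k; apply/andP.
have same_sign (k : 'I_N) : 0 < (x + r k) * (y + r k).
  case: (ltrgt0P (x + r k)) (x_nz k) => [x_gt0 | x_lt0 | -> //] _.
    by rewrite pmulr_rgt0 // (lt_trans x_gt0) // ltrD2r.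
  rewrite nmulr_rgt0 // lt_neqAle y_nz /=.
  by move: (no_pole k) => /= /negbT; rewrite negb_and -!leNgt; lra.
have secular (z : R) : PN N D b r z = 0 -> (forall k : 'I_N, z + r k != 0) ->
    \sum_(i < N) b i / (z + r i) = D.
  move=> PNz z_nz; move: PNz; rewrite PN_factor // => /eqP.
  rewrite mulf_eq0 subr_eq0 prodf_seq_eq0 => /orP[/hasP[k _ /= /eqP zk] | /eqP //].
  by move: (z_nz k); rewrite zk eqxx.
by have := ltr_sum_frac N_gt0 b_gt0 xy same_sign; rewrite !secular ?ltxx.
Qed.

End PNAlgebra.

Section NearPoles.
Variables (R : realFieldType) (n : nat) (D : R) (b r : nat -> R).
Local Notation N := n.+2.
Hypotheses (D_gt0 : 0 < D) (b_gt0 : forall i, (i < N)%N -> 0 < b i).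
Hypotheses (r0_gt0 : 0 < r 0%N) (r_incr : forall i, (i.+1 < N)%N -> r i < r i.+1).

Local Notation g := (rgap N r).
Local Notation M := (2 * r n.+1).
Local Notation bm := (bmin N b).
Local Notation B := (bmax N b).
Local Notation m := (mu N D b r).
Local Notation K := (D * M ^+ n.+1 + N%:R * B * M ^+ n).

Lemma r_le i k : (i <= k)%N -> (k < N)%N -> r i <= r k.
Proof.
rewrite leq_eqVlt => /orP[/eqP -> // | ik] kN.
exact/ltW/(incr_ltn_lt r_incr ik).
Qed.

Lemma r_gt0 k : (k < N)%N -> 0 < r k.
Proof. by move=> kN; apply: lt_le_trans r0_gt0 (r_le _ kN). Qed.

Lemma rgap_gt0 : 0 < g.
Proof.
apply: (big_ind (fun y => 0 < y)); first by rewrite subr_gt0 r_incr.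
  by move=> y z y_gt0 z_gt0; rewrite lt_min y_gt0.
by move=> i _; rewrite subr_gt0 r_incr // ltnS.
Qed.

Lemma rgap_le_sub i k : (i < k)%N -> (k < N)%N -> g <= r k - r i.
Proof.
move=> ik kN; have iSN : (i.+1 < N)%N by apply: leq_ltn_trans ik kN.
have gap_i : g <= r i.+1 - r i.
  by rewrite /rgap; exact: (bigmin_le _ (@Ordinal n.+1 i iSN)).
by apply: le_trans gap_i _; rewrite lerD2r r_le.
Qed.

Lemma rgap_le_dist (j k : 'I_N) : k != j -> g <= `|r k - r j|.
Proof.
case: (ltngtP j k) => [jk | kj | /val_inj ->]; last by rewrite eqxx.
  by rewrite ger0_norm ?rgap_le_sub // subr_ge0 r_le ?(ltnW jk).
by rewrite distrC ger0_norm ?rgap_le_sub // subr_ge0 r_le ?(ltnW kj).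
Qed.

Lemma rgap_le_M : g <= M.
Proof.
have := rgap_le_sub (ltnSn 0) (isT : (1 < N)%N).
have := r_le (isT : (1 <= n.+1)%N) (ltnSn n.+1); have := rgap_gt0; have := r0_gt0; lra.
Qed.

Lemma bmin_gt0 : 0 < bm.
Proof.
apply: (big_ind (fun y => 0 < y)); first exact: b_gt0.
  by move=> y z y_gt0 z_gt0; rewrite lt_min y_gt0.
by move=> i _; apply: b_gt0.
Qed.

Lemma bmin_le i : (i < N)%N -> bm <= b i.
Proof. by move=> iN; rewrite /bmin; exact: (bigmin_le _ (Ordinal iN)). Qed.

Lemma le_bmax i : (i < N)%N -> b i <= B.
Proof. by move=> iN; rewrite /bmax; exact: (le_bigmax _ _ (Ordinal iN)). Qed.

Lemma bmax_gt0 : 0 < B.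
Proof.
have N_gt0 : (0 < N)%N by [].
exact: lt_le_trans bmin_gt0 (le_trans (bmin_le N_gt0) (le_bmax N_gt0)).
Qed.

Local Notation Den := (4 * D * M ^+ n.+1 + 4 * N%:R * B * M ^+ n + 1).

Lemma muE : m = Num.min (Num.min (bm * g ^+ n.+1 / Den) (g / 4)) (r 0%N / 4).
Proof. by rewrite /mu subn2. Qed.

Lemma Den_gt0 : 0 < Den.
Proof.
have M_ge0 : 0 <= M by rewrite mulr_ge0 // ltW ?r_gt0.
by rewrite ltr_wpDl // addr_ge0 // !mulr_ge0 ?exprn_ge0 // ltW ?bmax_gt0.
Qed.

Lemma mu_gt0 : 0 < m.
Proof.
by rewrite muE !lt_min !divr_gt0 ?mulr_gt0 ?exprn_gt0 ?bmin_gt0 ?rgap_gt0 ?Den_gt0.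
Qed.

Lemma mu_le_ratio : m * Den <= bm * g ^+ n.+1.
Proof. by rewrite -ler_pdivlMr ?Den_gt0 // muE !ge_min lexx. Qed.

Lemma mu_le_rgap : m <= g / 4.
Proof. by rewrite muE !ge_min lexx orbT. Qed.

Lemma mu_le_r0 : m <= r 0%N / 4.
Proof. by rewrite muE ge_min lexx orbT. Qed.

Lemma mu_pow_le : 4 * N%:R * m * g ^+ n <= g ^+ n.+1.
Proof.
have g_ge0 : 0 <= g := ltW rgap_gt0.
have c_ge0 : 0 <= m * (4 * N%:R * B) by rewrite !mulr_ge0 ?ltW ?mu_gt0 ?bmax_gt0.
rewrite -(ler_pM2l bmax_gt0); apply: le_trans (ler_wpM2r (exprn_ge0 _ g_ge0)
  (le_trans (bmin_le (isT : (0 < N)%N)) (le_bmax (isT : (0 < N)%N)))).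
apply: le_trans mu_le_ratio.
have -> : B * (4 * N%:R * m * g ^+ n) = m * (4 * N%:R * B) * g ^+ n by ring.
have M_ge0 : 0 <= M := le_trans g_ge0 rgap_le_M.
have gM : g ^+ n <= M ^+ n by rewrite lerXn2r ?nnegrE ?rgap_le_M.
apply: le_trans (ler_wpM2l c_ge0 gM) _.
rewrite -(mulrA m); apply: ler_wpM2l; first exact: ltW mu_gt0.
have : 0 <= 4 * D * M ^+ n.+1 by rewrite mulr_ge0 ?exprn_ge0 // mulr_ge0 // ltW.
lra.
Qed.

Lemma rgap_sub_mu_pow : g ^+ n.+1 * 3 / 4 <= (g - m) ^+ n.+1.
Proof.
have m_le_g : m <= g by have := mu_le_rgap; have := rgap_gt0; lra.
apply: le_trans (exprB_ge n (ltW mu_gt0) m_le_g).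
have : 0 <= m * g ^+ n by rewrite mulr_ge0 ?exprn_ge0 ?ltW ?mu_gt0 ?rgap_gt0.
have := mu_pow_le.
rewrite -[n.+2%:R]natr1 -!(mulrA _ m); lra.
Qed.

Lemma mu_K_le : m * K <= bm * g ^+ n.+1 / 4.
Proof.
rewrite ler_pdivlMr //; apply: le_trans mu_le_ratio.
rewrite -(mulrA m); apply: ler_wpM2l; first exact: ltW mu_gt0.
lra.
Qed.

Section AtPole.
Variables (x : R) (j : 'I_N).
Hypothesis x_near : `|x + r j| <= m.

Lemma near_other_pole (k : 'I_N) : k != j -> g - m <= `|x + r k|.
Proof.
move=> kj; have := rgap_le_dist kj; have := ler_normB (x + r k) (x + r j).
have -> : x + r k - (x + r j) = r k - r j by ring.
by have := x_near; lra.
Qed.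

Lemma near_pole_le_M (k : 'I_N) : `|x + r k| <= M.
Proof.
have := r_gt0 (ltn_ord k); have := r_gt0 (ltn_ord j).
have := r_le (leq_ord k) (ltnSn n.+1); have := r_le (leq_ord j) (ltnSn n.+1).
have := mu_le_r0; have := r_le (leq0n n.+1) (ltnSn n.+1).
move: x_near; rewrite !ler_norml => /andP[? ?] *; apply/andP; split; lra.
Qed.

Lemma prod_but_ge : (g - m) ^+ n.+1 <= `|prod_but r j x|.
Proof.
rewrite normr_prod -(prodr_const_neq1 j).
apply: ler_prod => k kj; rewrite near_other_pole // andbT subr_ge0.
by have := mu_le_rgap; have := rgap_gt0; lra.
Qed.

Lemma PN_quot_le : `|PN_quot D b r j x| <= K.
Proof.
have M_ge0 : 0 <= M := le_trans (normr_ge0 _) (near_pole_le_M j).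
apply: le_trans (ler_normB _ _) (lerD _ _).
  rewrite normrM gtr0_norm //; apply: ler_wpM2l; first exact: ltW.
  rewrite normr_prod -(prodr_const_neq1 j).
  by apply: ler_prod => k _; rewrite normr_ge0 near_pole_le_M.
apply: le_trans (ler_norm_sum _ _ _) _.
apply: (le_trans (y := \sum_(i < N | i != j) B * M ^+ n)).
  apply: ler_sum => i ij; rewrite normrM normr_prod gtr0_norm ?b_gt0 //.
  apply: ler_pM; [exact/ltW/b_gt0 | exact: prodr_ge0 | exact: le_bmax |].
  have := prodr_const_neq2 M ij; rewrite subn2 /= => <-.
  by apply: ler_prod => k _; rewrite normr_ge0 near_pole_le_M.
rewrite sumr_const_neq1 -[B * _ *+ _]mulr_natl mulrA.
apply: ler_wpM2r; first exact: exprn_ge0.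
by apply: ler_wpM2r; [exact/ltW/bmax_gt0 | rewrite ler_nat].
Qed.

Lemma PN_near_pole : bm * g ^+ n.+1 / 2 <= `|PN N D b r x|.
Proof.
rewrite (PN_split D b r j).
have := lerB_normD (- b j * prod_but r j x) ((x + r j) * PN_quot D b r j x).
rewrite normrM normrN (gtr0_norm (b_gt0 (ltn_ord j))) normrM.
have pole_term : bm * (g ^+ n.+1 * 3 / 4) <= b j * `|prod_but r j x|.
  have g_ge0 : 0 <= g := ltW rgap_gt0.
  apply: ler_pM; [exact/ltW/bmin_gt0 | by rewrite divr_ge0 ?mulr_ge0 ?exprn_ge0 | |].
    exact: bmin_le (ltn_ord j).
  exact: le_trans rgap_sub_mu_pow prod_but_ge.
have quot_term : `|x + r j| * `|PN_quot D b r j x| <= bm * g ^+ n.+1 / 4.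
  by apply: le_trans mu_K_le; apply: ler_pM; rewrite ?PN_quot_le.
lra.
Qed.

End AtPole.

Lemma root_far_from_poles y (k : 'I_N) : PN N D b r y = 0 -> m < `|y + r k|.
Proof.
move=> PNy; rewrite ltNge; apply/negP => /PN_near_pole.
by rewrite PNy normr0 leNgt divr_gt0 ?mulr_gt0 ?exprn_gt0 ?bmin_gt0 ?rgap_gt0.
Qed.

Lemma root_gap y z : y < z -> PN N D b r y = 0 -> PN N D b r z = 0 -> 2 * m < z - y.
Proof.
move=> yz PNy PNz.
have root_nz u : PN N D b r u = 0 -> forall k : 'I_N, u + r k != 0.
  by move=> PNu k; rewrite -normr_gt0 (lt_trans mu_gt0) ?root_far_from_poles.
have [k /andP[yk kz]] := PN_pole_between_roots (isT : (0 < N)%N) b_gt0 yz PNy PNz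
  (root_nz _ PNy) (root_nz _ PNz).
have := root_far_from_poles k PNy; rewrite ltr0_norm; last by lra.
have := root_far_from_poles k PNz; rewrite gtr0_norm; last by lra.
lra.
Qed.

End NearPoles.

Theorem lemma5p2 (R : realFieldType) (N : nat) (D : R) (b r a : nat -> R) :
  (2 <= N)%N ->
  0 < D ->
  (forall i, (i < N)%N -> 0 < b i) ->
  0 < r 0%N ->
  (forall i, (i.+1 < N)%N -> r i < r i.+1) ->
  (* a_1 > a_2 > ... > a_N are the roots of P_N *)
  (forall i, (i < N)%N -> PN N D b r (a i) = 0) ->
  (forall i, (i.+1 < N)%N -> a i.+1 < a i) ->
  (forall x : R, (exists j, (j < N)%N /\ `|x + r j| <= mu N D b r) ->
     bmin N b * rgap N r ^+ (N.-1) / 2 <= `|PN N D b r x|)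
  /\ 0 < bmin N b * rgap N r ^+ (N.-1) / 2
  /\ (forall i j, (i < j)%N -> (j < N)%N -> 2 * mu N D b r <= `|a i - a j|).
Proof.
case: N => [|[|n]] // _ D_gt0 b_gt0 r0_gt0 r_incr PN_a a_decr.
split; [|split].
- move=> x [j [jN x_near]].
  exact: (PN_near_pole D_gt0 b_gt0 r0_gt0 r_incr (j := Ordinal jN)).
- by rewrite divr_gt0 ?mulr_gt0 ?exprn_gt0 ?bmin_gt0 ?rgap_gt0.
move=> i j ij jN; have iN := ltn_trans ij jN.
have a_ji : a j < a i.
  rewrite -ltrN2; apply: (incr_ltn_lt (f := fun k => - a k)) ij jN.
  by move=> k kN; rewrite ltrN2 a_decr.
rewrite gtr0_norm ?subr_gt0 // ltW //.
exact: root_gap D_gt0 b_gt0 r0_gt0 r_incr _ _ a_ji (PN_a _ jN) (PN_a _ iN).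
Qed.
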